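(* Let $1/4<a\le1/3$ and $m\ge6$ be an integer. For $\theta\in(2\pi/3,\pi)$ with $1-4a\cos^2\theta\neq0$ define \[ \zeta(\theta)=\frac{(2a-1)\cos\theta+\sqrt{(1-4a)\cos^2\theta+a}}{1-4a\cos^2\theta},\qquad g_m(\theta)=\frac{(\zeta(\theta)-\cos\theta)\sin((m+1)\theta)}{\sin\theta}-\cos((m+1)\theta)+\frac{1}{\zeta(\theta)^{m+1}}. \] Then there exists $h\in\mathbb{N}$ with $\lfloor 2(m+1)/3\rfloor+1\le h-1<h\le m+1$ such that \[ \theta_{h-1}:=\frac{h-1}{m+1}\pi<\cos^{-1}\!\left(-\frac{1}{2\sqrt a}\right)\le\frac{h}{m+1}\pi=:\theta_h. \] Furthermore, provided $\cos^{-1}\!\left(-\frac{1}{2\sqrt a}\right)\neq\frac{h}{m+1}\pi$, the function $g_m$ has at least two zeros in the open interval $J_h=\left(\frac{h-1}{m+1}\pi,\frac{h}{m+1}\pi\right)$ whenever $h\le m$, and at least one zero in $J_h$ when $h=m+1$.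
   Context: Here $\cos^{-1}$ takes values in $[0,\pi]$. The functions $\zeta$ and $g_m$ are real-valued on their domain and have a vertical asymptote at $\theta=\cos^{-1}(-1/(2\sqrt a))$, where $1-4a\cos^2\theta=0$; zeros of $g_m$ are counted at points of $J_h$ where $g_m$ is defined. *)

From Stdlib Require Import Reals Lra Lia.
Open Scope R_scope.

Definition zeta (a t : R) : R :=
  ((2*a - 1) * cos t + sqrt ((1 - 4*a) * (cos t)^2 + a)) / (1 - 4*a*(cos t)^2).

Definition g (a : R) (m : nat) (t : R) : R :=
  (zeta a t - cos t) * sin (INR (m+1) * t) / sin t
  - cos (INR (m+1) * t) + 1 / (zeta a t) ^ (m+1).

Definition g_defined (a : R) (t : R) : Prop :=
  1 - 4*a*(cos t)^2 <> 0 /\ sin t <> 0 /\ zeta a t <> 0.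

Definition zero_in (a : R) (m : nat) (lo hi t : R) : Prop :=
  lo < t < hi /\ g_defined a t /\ g a m t = 0.

From Stdlib Require Import Reals Lra Lia.
From Coquelicot Require Import Coquelicot.
Open Scope R_scope.

(* Clearing the denominator D = 1 - 4a cos^2 t of zeta gives a function G = D g that is
   continuous on (PI/2, PI); D vanishes only at T = acos (-1/(2 sqrt a)), being positive
   before T and negative after it. At a node t_j = j PI/(m+1) the sine term drops out and
   G = D ((D/N)^(m+1) - (-1)^j), where N > |D| is the numerator of zeta, while at T we have
   G = N sin((m+1) T) / sin T. With s = (-1)^(h-1), the sign of sin((m+1) t) on J_h, s G is
   therefore negative at t_(h-1) and at t_h < PI but positive at T, and the intermediate
   value theorem gives a zero of G, hence of g, on each side of T.
   The bounds on h come from 5 PI/6 <= T < PI, i.e. from a <= 1/3. *)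

Lemma sin_cos_INR_PI (k : nat) : sin (INR k * PI) = 0 /\ cos (INR k * PI) = (-1) ^ k.
Proof.
  induction k as [|k [IHs IHc]].
  - rewrite Rmult_0_l, sin_0, cos_0; auto.
  - replace (INR (S k) * PI) with (INR k * PI + PI) by (rewrite S_INR; ring).
    rewrite neg_sin, neg_cos, IHs, IHc; simpl; split; ring.
Qed.

Lemma sin_sign_between_INR_PI (k : nat) (x : R) :
  INR k * PI < x < INR (S k) * PI -> 0 < (-1) ^ k * sin x.
Proof.
  revert x; induction k as [|k IH]; intros x Hx.
  - simpl in Hx; rewrite Rmult_0_l, Rmult_1_l in Hx.
    rewrite pow_O, Rmult_1_l; apply sin_gt_0; lra.
  - replace x with (x - PI + PI) by ring; rewrite neg_sin.
    replace ((-1) ^ S k * - sin (x - PI)) with ((-1) ^ k * sin (x - PI)) by (simpl; ring).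
    apply IH; rewrite !S_INR in *; lra.
Qed.

Lemma sign_pow_sqr (k : nat) : (-1) ^ k * (-1) ^ k = 1.
Proof. rewrite <- Rpow_mult_distr, <- (pow1 k); f_equal; ring. Qed.

Lemma sign_pow_cancel_mul (k : nat) (x y : R) : (-1) ^ k * x * ((-1) ^ k * y) = x * y.
Proof. rewrite <- (Rmult_1_l (x * y)), <- (sign_pow_sqr k); ring. Qed.

Lemma sign_pow_mul_lt_1 (k n : nat) (r : R) :
  Rabs r < 1 -> (0 < n)%nat -> -1 < (-1) ^ k * r ^ n < 1.
Proof.
  intros Hr Hn.
  enough (Habs : Rabs ((-1) ^ k * r ^ n) < 1) by (apply Rabs_def2 in Habs; lra).
  rewrite Rabs_mult, pow_1_abs, <- RPow_abs, Rmult_1_l.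
  now apply pow_lt_1_compat; [split; [apply Rabs_pos|]|].
Qed.

Lemma IVT_sign_change (f : R -> R) (x y : R) :
  x < y -> (forall t, x <= t <= y -> continuity_pt f t) -> f x * f y < 0 ->
  exists z, x < z < y /\ f z = 0.
Proof.
  intros Hxy Hf Hsgn.
  assert (Hfx0 : f x <> 0) by (intros E; rewrite E in Hsgn; lra).
  assert (Hfy0 : f y <> 0) by (intros E; rewrite E in Hsgn; lra).
  assert (Hz : exists z, x <= z <= y /\ f z = 0).
  { destruct (Rlt_or_le (f x) 0) as [Hfx|Hfx].
    - assert (Hfy : 0 < f y) by nra.
      destruct (Ranalysis5.IVT_interv f x y Hf Hxy Hfx Hfy) as [z Hz]; eauto.
    - assert (Hfx' : - f x < 0) by nra.
      assert (Hfy : 0 < - f y) by nra.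
      assert (Hf' : forall t, x <= t <= y -> continuity_pt (fun t => - f t) t)
        by (intros t Ht; now apply continuity_pt_opp, Hf).
      destruct (Ranalysis5.IVT_interv _ x y Hf' Hxy Hfx' Hfy) as [z [Hz Hfz]].
      exists z; split; [exact Hz|lra]. }
  destruct Hz as [z [Hz Hfz]]; exists z; split; [|exact Hfz].
  assert (z <> x) by (intros ->; contradiction).
  assert (z <> y) by (intros ->; contradiction).
  lra.
Qed.

Lemma cos_bounds_2PI3_PI (t : R) : 2 * PI / 3 < t < PI -> -1 < cos t < -1 / 2.
Proof.
  intros Ht; pose proof PI_RGT_0.
  assert (Hcos23 : cos (2 * PI / 3) = -1 / 2).
  { replace (2 * PI / 3) with (PI - PI / 3) by field.
    rewrite Rtrigo_facts.cos_pi_minus, cos_PI3; field. }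
  rewrite <- Hcos23; split; [rewrite <- cos_PI|]; apply cos_decreasing_1; lra.
Qed.

Lemma cos_bounds_PI2_PI (t : R) : PI / 2 < t < PI -> -1 < cos t < 0.
Proof.
  intros Ht; pose proof PI_RGT_0.
  split; [rewrite <- cos_PI|]; [apply cos_decreasing_1 | apply cos_lt_0]; lra.
Qed.

Definition zeta_num (a c : R) : R := (2 * a - 1) * c + sqrt ((1 - 4 * a) * c ^ 2 + a).
Definition zeta_den (a c : R) : R := 1 - 4 * a * c ^ 2.

Section ZetaAlgebra.

Variable a : R.
Hypothesis Ha : 1 / 4 < a <= 1 / 3.

Lemma zeta_radicand_pos (c : R) : -1 < c < 1 -> 0 < (1 - 4 * a) * c ^ 2 + a.
Proof. intros Hc; assert (c ^ 2 < 1) by nra; nra. Qed.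

Lemma zeta_num_pos (c : R) : -1 < c < 0 -> 0 < zeta_num a c.
Proof.
  intros Hc; unfold zeta_num.
  pose proof (sqrt_pos ((1 - 4 * a) * c ^ 2 + a)); nra.
Qed.

Lemma Rabs_zeta_den_lt_num (c : R) : -1 < c < -1 / 2 -> Rabs (zeta_den a c) < zeta_num a c.
Proof.
  intros Hc; pose proof (zeta_num_pos c ltac:(lra)) as HN.
  assert (Hs : sqrt ((1 - 4 * a) * c ^ 2 + a) ^ 2 = (1 - 4 * a) * c ^ 2 + a)
    by (apply pow2_sqrt, Rlt_le, zeta_radicand_pos; lra).
  pose proof (sqrt_pos ((1 - 4 * a) * c ^ 2 + a)).
  unfold zeta_num, zeta_den in *; set (s := sqrt _) in *; set (D := 1 - 4 * a * c ^ 2).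
  apply Rabs_def1.
  - destruct (Rle_or_lt D 0) as [HD|HD]; [lra|].
    assert (E : s ^ 2 - (D - (2 * a - 1) * c) ^ 2 = D * ((2 * c + 1) * (2 * a * c + a - 1)))
      by (rewrite Hs; unfold D; ring).
    assert (2 * a * c + a - 1 < 0) by nra.
    assert (0 < (2 * c + 1) * (2 * a * c + a - 1)) by nra.
    assert (0 < D * ((2 * c + 1) * (2 * a * c + a - 1))) by nra.
    nra.
  - destruct (Rle_or_lt 0 D) as [HD|HD]; [lra|].
    assert (E : s ^ 2 - (- D - (2 * a - 1) * c) ^ 2 = D * ((2 * c - 1) * (2 * a * c + 1 - a)))
      by (rewrite Hs; unfold D; ring).
    assert (0 < 2 * a * c + 1 - a) by nra.
    assert ((2 * c - 1) * (2 * a * c + 1 - a) < 0) by nra.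
    assert (0 < D * ((2 * c - 1) * (2 * a * c + 1 - a))) by nra.
    nra.
Qed.

Lemma Rabs_zeta_ratio_lt_1 (c : R) :
  -1 < c < -1 / 2 -> Rabs (zeta_den a c / zeta_num a c) < 1.
Proof.
  intros Hc; pose proof (zeta_num_pos c ltac:(lra)) as HN.
  rewrite Rabs_div, (Rabs_pos_eq (zeta_num a c)) by lra.
  apply Rlt_div_l; [lra|]; rewrite Rmult_1_l; now apply Rabs_zeta_den_lt_num.
Qed.

Lemma zeta_den_cos_decreasing (t1 t2 : R) :
  PI / 2 <= t1 < t2 -> t2 <= PI -> zeta_den a (cos t2) < zeta_den a (cos t1).
Proof.
  intros Ht1 Ht2; pose proof PI_RGT_0.
  assert (cos t2 < cos t1) by (apply cos_decreasing_1; lra).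
  assert (cos t1 <= 0) by (apply cos_le_0; lra).
  assert (cos t1 ^ 2 < cos t2 ^ 2) by nra.
  unfold zeta_den; nra.
Qed.

End ZetaAlgebra.

Definition G (a : R) (m : nat) (t : R) : R :=
  let N := zeta_num a (cos t) in
  let D := zeta_den a (cos t) in
  (N - cos t * D) * sin (INR (m + 1) * t) / sin t
  - D * cos (INR (m + 1) * t) + D * (D / N) ^ (m + 1).

Lemma g_eq_G_div (a : R) (m : nat) (t : R) :
  sin t <> 0 -> zeta_den a (cos t) <> 0 -> zeta_num a (cos t) <> 0 ->
  g a m t = G a m t / zeta_den a (cos t).
Proof.
  intros Hs HD HN.
  assert (Hpow : 1 / (zeta_num a (cos t) / zeta_den a (cos t)) ^ (m + 1)
                 = (zeta_den a (cos t) / zeta_num a (cos t)) ^ (m + 1)).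
  { now rewrite Rdiv_1_l, <- pow_inv, Rinv_div. }
  unfold g, zeta, G; fold (zeta_num a (cos t)) (zeta_den a (cos t)); rewrite Hpow.
  field; auto.
Qed.

Lemma G_continuous (a : R) (m : nat) (t : R) :
  1 / 4 < a <= 1 / 3 -> PI / 2 < t < PI -> continuity_pt (G a m) t.
Proof.
  intros Ha Ht; pose proof PI_RGT_0.
  pose proof (cos_bounds_PI2_PI t Ht) as Hcos.
  assert (Hsin : 0 < sin t) by (apply sin_gt_0; lra).
  pose proof (zeta_radicand_pos a Ha (cos t) ltac:(lra)) as Hrad.
  pose proof (zeta_num_pos a Ha (cos t) Hcos) as HN.
  apply continuity_pt_filterlim, (ex_derive_continuous (V := R_NormedModule)).
  unfold G, zeta_num, zeta_den in *; auto_derive.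
  replace (cos t * (cos t * 1)) with (cos t ^ 2) by ring; repeat split; lra.
Qed.

Definition node (m j : nat) : R := INR j / INR (m + 1) * PI.

Lemma node_scaled (m j : nat) : INR (m + 1) * node m j = INR j * PI.
Proof.
  unfold node; field; apply not_0_INR; lia.
Qed.

Lemma node_lt_PI (m j : nat) : (j <= m)%nat -> node m j < PI.
Proof.
  intros Hj; pose proof PI_RGT_0.
  assert (Hn : 0 < INR (m + 1)) by (apply lt_0_INR; lia).
  assert (INR j < INR (m + 1)) by (apply lt_INR; lia).
  apply (Rmult_lt_reg_l (INR (m + 1))); [lra|]; rewrite node_scaled; nra.
Qed.

Lemma node_gt_2PI3 (m j : nat) : ((2 * (m + 1)) / 3 + 1 <= j)%nat -> 2 * PI / 3 < node m j.
Proof.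
  intros Hj; pose proof PI_RGT_0.
  assert (Hn : 0 < INR (m + 1)) by (apply lt_0_INR; lia).
  assert (H3 : (2 * (m + 1) < 3 * j)%nat)
    by (pose proof (Nat.div_mod_eq (2 * (m + 1)) 3);
        pose proof (Nat.mod_upper_bound (2 * (m + 1)) 3); lia).
  apply lt_INR in H3; rewrite !mult_INR in H3; simpl INR in H3.
  apply (Rmult_lt_reg_l (INR (m + 1))); [lra|]; rewrite node_scaled; nra.
Qed.

Lemma sin_sign_between_nodes (m k : nat) (t : R) :
  node m k < t < node m (S k) -> 0 < (-1) ^ k * sin (INR (m + 1) * t).
Proof.
  intros Ht; apply sin_sign_between_INR_PI.
  assert (Hn : 0 < INR (m + 1)) by (apply lt_0_INR; lia).
  rewrite <- (node_scaled m k), <- (node_scaled m (S k)); split; apply Rmult_lt_compat_l; lra.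
Qed.

Lemma G_node (a : R) (m j : nat) :
  G a m (node m j) = zeta_den a (cos (node m j)) *
    ((zeta_den a (cos (node m j)) / zeta_num a (cos (node m j))) ^ (m + 1) - (-1) ^ j).
Proof.
  destruct (sin_cos_INR_PI j) as [Hs Hc].
  unfold G; rewrite node_scaled, Hs, Hc; unfold Rdiv; ring.
Qed.

Lemma G_at_den_root (a : R) (m : nat) (t : R) :
  zeta_den a (cos t) = 0 -> G a m t = zeta_num a (cos t) * sin (INR (m + 1) * t) / sin t.
Proof.
  intros HD; unfold G; rewrite HD; unfold Rdiv; ring.
Qed.

Lemma g_zero_of_G_zero (a : R) (m : nat) (t : R) :
  1 / 4 < a <= 1 / 3 -> PI / 2 < t < PI -> zeta_den a (cos t) <> 0 -> G a m t = 0 ->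
  g_defined a t /\ g a m t = 0.
Proof.
  intros Ha Ht HD HG; pose proof PI_RGT_0.
  pose proof (cos_bounds_PI2_PI t Ht) as Hcos.
  assert (Hsin : sin t <> 0) by (apply Rgt_not_eq, sin_gt_0; lra).
  assert (HN : zeta_num a (cos t) <> 0) by (apply Rgt_not_eq, zeta_num_pos; assumption).
  split; [repeat split; auto|].
  - change (zeta_num a (cos t) / zeta_den a (cos t) <> 0).
    now apply Rmult_integral_contrapositive_currified, Rinv_neq_0_compat.
  - rewrite g_eq_G_div, HG by assumption; apply Rdiv_0_l.
Qed.

Section ZerosAroundDenRoot.

Variables (a : R) (m k : nat) (ts : R).
Hypotheses (Ha : 1 / 4 < a <= 1 / 3) (Hden : zeta_den a (cos ts) = 0)
  (Hk : 2 * PI / 3 < node m k) (Hts : node m k < ts < node m (S k)) (HtsPI : ts < PI).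

Lemma G_sign_at_den_root : 0 < (-1) ^ k * G a m ts.
Proof.
  pose proof PI_RGT_0.
  assert (Hsin : 0 < sin ts) by (apply sin_gt_0; lra).
  assert (HN : 0 < zeta_num a (cos ts)).
  { apply zeta_num_pos; [exact Ha|].
    pose proof (cos_bounds_2PI3_PI ts ltac:(lra)); lra. }
  pose proof (sin_sign_between_nodes m k ts Hts).
  rewrite G_at_den_root by exact Hden.
  replace ((-1) ^ k * (zeta_num a (cos ts) * sin (INR (m + 1) * ts) / sin ts))
    with (zeta_num a (cos ts) * ((-1) ^ k * sin (INR (m + 1) * ts)) / sin ts) by (field; lra).
  apply Rdiv_lt_0_compat; [apply Rmult_lt_0_compat|]; lra.
Qed.

Lemma g_zero_before_den_root :
  exists t, zero_in a m (node m k) (node m (S k)) t /\ t < ts.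
Proof.
  pose proof PI_RGT_0.
  set (lo := node m k) in *; set (sg := (-1) ^ k).
  set (D := zeta_den a (cos lo)); set (N := zeta_num a (cos lo)).
  pose proof (cos_bounds_2PI3_PI lo ltac:(lra)) as Hcos.
  assert (HD : 0 < D) by (rewrite <- Hden; apply zeta_den_cos_decreasing; lra).
  pose proof (sign_pow_mul_lt_1 k (m + 1) (D / N)
                (Rabs_zeta_ratio_lt_1 a Ha _ Hcos) ltac:(lia)) as Hpow; fold sg in Hpow.
  assert (Hlo : sg * G a m lo < 0).
  { replace (sg * G a m lo) with (D * (sg * (D / N) ^ (m + 1) - 1)).
    { apply Rmult_pos_neg; lra. }
    unfold lo; rewrite G_node; fold lo D N; rewrite <- (sign_pow_sqr k); fold sg; ring. }
  pose proof G_sign_at_den_root as Hts_sign; fold sg in Hts_sign.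
  assert (Hprod : G a m lo * G a m ts < 0).
  { rewrite <- (sign_pow_cancel_mul k); fold sg; nra. }
  destruct (IVT_sign_change (G a m) lo ts) as [z [Hz HGz]]; [lra| |exact Hprod|].
  { intros t Ht; apply G_continuous; [exact Ha|lra]. }
  assert (HDz : 0 < zeta_den a (cos z)) by (rewrite <- Hden; apply zeta_den_cos_decreasing; lra).
  exists z; split; [|lra].
  split; [lra|]; apply g_zero_of_G_zero; [exact Ha|lra|lra|exact HGz].
Qed.

Lemma g_zero_after_den_root :
  node m (S k) < PI -> exists t, zero_in a m (node m k) (node m (S k)) t /\ ts < t.
Proof.
  intros Hhi; pose proof PI_RGT_0.
  set (hi := node m (S k)) in *; set (sg := (-1) ^ k).
  set (D := zeta_den a (cos hi)); set (N := zeta_num a (cos hi)).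
  pose proof (cos_bounds_2PI3_PI hi ltac:(lra)) as Hcos.
  assert (HD : D < 0) by (rewrite <- Hden; apply zeta_den_cos_decreasing; lra).
  pose proof (sign_pow_mul_lt_1 k (m + 1) (D / N)
                (Rabs_zeta_ratio_lt_1 a Ha _ Hcos) ltac:(lia)) as Hpow; fold sg in Hpow.
  assert (Hhi_sign : sg * G a m hi < 0).
  { replace (sg * G a m hi) with (D * (sg * (D / N) ^ (m + 1) + 1)).
    { apply Rmult_neg_pos; lra. }
    unfold hi; rewrite G_node; fold hi D N; rewrite <- (sign_pow_sqr k); simpl; fold sg; ring. }
  pose proof G_sign_at_den_root as Hts_sign; fold sg in Hts_sign.
  assert (Hprod : G a m ts * G a m hi < 0).
  { rewrite <- (sign_pow_cancel_mul k); fold sg; nra. }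
  destruct (IVT_sign_change (G a m) ts hi) as [z [Hz HGz]]; [lra| |exact Hprod|].
  { intros t Ht; apply G_continuous; [exact Ha|lra]. }
  assert (HDz : zeta_den a (cos z) < 0) by (rewrite <- Hden; apply zeta_den_cos_decreasing; lra).
  exists z; split; [|lra].
  split; [lra|]; apply g_zero_of_G_zero; [exact Ha|lra|lra|exact HGz].
Qed.

End ZerosAroundDenRoot.

Definition theta_star (a : R) : R := acos (- (1 / (2 * sqrt a))).

Lemma theta_star_cos_bounds (a : R) : 1 / 4 < a -> -1 < - (1 / (2 * sqrt a)) < 0.
Proof.
  intros Ha; assert (Hsa : 1 / 2 < sqrt a).
  { rewrite <- (sqrt_Rsqr (1 / 2)) by lra; apply sqrt_lt_1; unfold Rsqr; lra. }
  assert (0 < 1 / (2 * sqrt a) < 1); [|lra].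
  split; [apply Rdiv_lt_0_compat; lra|].
  apply Rlt_div_l; lra.
Qed.

Lemma zeta_den_theta_star (a : R) : 1 / 4 < a -> zeta_den a (cos (theta_star a)) = 0.
Proof.
  intros Ha; pose proof (theta_star_cos_bounds a Ha).
  unfold theta_star, zeta_den; rewrite cos_acos by lra.
  assert (Hsa : 0 < sqrt a) by (apply sqrt_lt_R0; lra).
  rewrite <- (sqrt_sqrt a) at 1 by lra; field; lra.
Qed.

Lemma theta_star_bounds (a : R) : 1 / 4 < a <= 1 / 3 -> 5 * PI / 6 <= theta_star a < PI.
Proof.
  intros Ha; pose proof (theta_star_cos_bounds a ltac:(lra)) as Hc.
  destruct (acos_bound_lt (- (1 / (2 * sqrt a)))) as [Hts0 HtsPI]; [lra|].
  fold (theta_star a) in Hts0, HtsPI; pose proof PI_RGT_0.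
  split; [|exact HtsPI].
  apply Rnot_lt_le; intros Hlt.
  assert (Hcos : cos (5 * PI / 6) < cos (theta_star a)) by (apply cos_decreasing_1; lra).
  replace (5 * PI / 6) with (PI - PI / 6) in Hcos by field.
  rewrite Rtrigo_facts.cos_pi_minus, cos_PI6 in Hcos.
  unfold theta_star in Hcos; rewrite cos_acos in Hcos by lra.
  assert (Hsa : 0 < sqrt a) by (apply sqrt_lt_R0; lra).
  assert (H3a : sqrt 3 * sqrt a <= 1).
  { rewrite <- sqrt_mult, <- sqrt_1 by lra; apply sqrt_le_1_alt; lra. }
  assert (Hsa_inv : 1 / (2 * sqrt a) * (2 * sqrt a) = 1) by (field; lra).
  nra.
Qed.

Lemma exists_nat_bracket (N : nat) (x : R) :
  0 < x -> x <= INR N -> exists k, (k < N)%nat /\ INR k < x <= INR (S k).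
Proof.
  intros Hx; induction N as [|N IH]; intros HN; [simpl in HN; lra|].
  destruct (Rle_lt_dec x (INR N)) as [Hle|Hlt].
  - destruct (IH Hle) as (k & Hk & Hxk); exists k; split; [lia|exact Hxk].
  - exists N; split; [lia|lra].
Qed.

Lemma exists_node_bracket (m : nat) (t : R) :
  0 < t < PI -> exists k, (k <= m)%nat /\ node m k < t <= node m (S k).
Proof.
  intros Ht; pose proof PI_RGT_0.
  assert (Hn : 0 < INR (m + 1)) by (apply lt_0_INR; lia).
  destruct (exists_nat_bracket (m + 1) (INR (m + 1) * t / PI)) as (k & Hk & Hlo & Hhi).
  - apply Rdiv_lt_0_compat; [apply Rmult_lt_0_compat|]; lra.
  - apply Rle_div_l; [lra|]; apply Rmult_le_compat_l; lra.
  - exists k; split; [lia|].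
    apply Rlt_div_r in Hlo; [|lra]; apply Rle_div_l in Hhi; [|lra].
    rewrite <- (node_scaled m k) in Hlo; rewrite <- (node_scaled m (S k)) in Hhi.
    split; [apply (Rmult_lt_reg_l (INR (m + 1))) | apply (Rmult_le_reg_l (INR (m + 1)))]; lra.
Qed.

Lemma node_index_lower_bound (m k : nat) (t : R) :
  (6 <= m)%nat -> 5 * PI / 6 <= t <= node m (S k) -> ((2 * (m + 1)) / 3 + 1 <= k)%nat.
Proof.
  intros Hm Ht; pose proof PI_RGT_0.
  assert (Hn : 0 < INR (m + 1)) by (apply lt_0_INR; lia).
  assert (H56 : (5 * (m + 1) <= 6 * S k)%nat).
  { apply INR_le; rewrite !mult_INR; simpl (INR 5); simpl (INR 6).
    apply (Rmult_le_reg_r PI); [lra|]; pose proof (node_scaled m (S k)); nra. }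
  pose proof (Nat.div_mod_eq (2 * (m + 1)) 3); pose proof (Nat.mod_upper_bound (2 * (m + 1)) 3).
  lia.
Qed.

Theorem lemma2p6 (a : R) (m : nat) :
  1/4 < a <= 1/3 -> (6 <= m)%nat ->
  exists h : nat,
    ((2 * (m+1)) / 3 + 1 <= h - 1)%nat /\ (h - 1 < h)%nat /\ (h <= m + 1)%nat /\
    INR (h - 1) / INR (m+1) * PI < acos (- (1 / (2 * sqrt a))) /\
    acos (- (1 / (2 * sqrt a))) <= INR h / INR (m+1) * PI /\
    (acos (- (1 / (2 * sqrt a))) <> INR h / INR (m+1) * PI ->
      ((h <= m)%nat ->
         exists t1 t2, t1 <> t2 /\
           zero_in a m (INR (h - 1) / INR (m+1) * PI) (INR h / INR (m+1) * PI) t1 /\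
           zero_in a m (INR (h - 1) / INR (m+1) * PI) (INR h / INR (m+1) * PI) t2) /\
      (h = (m + 1)%nat ->
         exists t,
           zero_in a m (INR (h - 1) / INR (m+1) * PI) (INR h / INR (m+1) * PI) t)).
Proof.
  intros Ha Hm; fold (theta_star a).
  destruct (theta_star_bounds a Ha) as [Hts56 HtsPI].
  pose proof (zeta_den_theta_star a ltac:(lra)) as Hden.
  destruct (exists_node_bracket m (theta_star a)) as (k & Hkm & Hlo & Hhi).
  { pose proof PI_RGT_0; lra. }
  pose proof (node_index_lower_bound m k _ Hm (conj Hts56 Hhi)) as Hk.
  exists (S k); replace (S k - 1)%nat with k by lia; fold (node m k) (node m (S k)).
  split; [exact Hk|]; split; [lia|]; split; [lia|]; split; [exact Hlo|]; split; [exact Hhi|].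
  intros Hne.
  assert (Hts : node m k < theta_star a < node m (S k))
    by (split; [|destruct (Rle_lt_or_eq_dec _ _ Hhi)]; tauto).
  pose proof (node_gt_2PI3 m k Hk) as Hk23.
  destruct (g_zero_before_den_root a m k _ Ha Hden Hk23 Hts HtsPI) as (t1 & Ht1 & Ht1ts).
  split.
  - intros HSkm.
    destruct (g_zero_after_den_root a m k _ Ha Hden Hk23 Hts HtsPI (node_lt_PI m (S k) HSkm))
      as (t2 & Ht2 & Ht2ts).
    exists t1, t2; split; [lra|tauto].
  - intros _; exists t1; exact Ht1.
Qed.
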